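(* Let $m, n \geq 2$ be integers and let $D_n^m \subset \mathbb{R}^2$ be the set defined below, with bars $B_1,\dots,B_{2^n}$. Let $A$ and $A'$ be translates of $D_n^m$, with bars $B_i$ of $A$ and $B_i'$ of $A'$ being the translates of the corresponding bars of $D_n^m$. Suppose that for some $1 \leq r \leq 2^n$ the first bar $B_1'$ of $A'$ is obtained from the bar $B_r$ of $A$ by a translation by $y^\ast \geq 1$ downwards and by $x^\ast$ to the right, where $1 \leq x^\ast \leq m-1$. Then $A$ and $A'$ have disjoint interiors.
   Context: Let $s_1, s_2, \dots$ be the sequence with $s_i = 1 + \nu_2(i)$, where $\nu_2(i)$ is the exponent of $2$ in the prime factorization of $i$ (so $s_i$ is the position, counted from the right, of the lowest $1$ bit of $i$ in binary; the sequence begins $1,2,1,3,1,2,1,4,\dots$). For $i \geq 1$ put $y_i = \sum_{j=1}^{i-1} s_j$ (so $y_1 = 0$). For integers $m \geq 2$, $n \geq 1$, define the bars $B_i = [(i-1)m,\, im] \times [y_i,\, y_i + 1]$ for $1 \leq i \leq 2^n$ (axis-parallel rectangles of width $m$ and height $1$), and the connectors $V_i = [im-1,\, im] \times [y_i + 1,\, y_{i+1} + 1]$ for $1 \leq i \leq 2^n - 1$ (axis-parallel rectangles of width $1$ and height $s_i$). Define $D_n^m = \bigcup_{i=1}^{2^n} B_i \cup \bigcup_{i=1}^{2^n-1} V_i$; this is a topological disk in the plane. *)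

From Stdlib Require Import Reals Lra Lia Arith List.
Open Scope R_scope.

(* 2-adic valuation nu_2(i) (with nu_2(0) = 0, never used). *)
Fixpoint nu2_aux (fuel i : nat) : nat :=
  match fuel with
  | O => O
  | S f => if Nat.eqb i 0 then O
           else if Nat.even i then S (nu2_aux f (Nat.div i 2)) else O
  end.
Definition nu2 (i : nat) : nat := nu2_aux i i.

Definition s (i : nat) : nat := S (nu2 i).

Definition y (i : nat) : nat := fold_right Nat.add O (map s (seq 1 (i - 1))).

Definition bar (m i : nat) (p : R * R) : Prop :=
  INR ((i - 1) * m) <= fst p <= INR (i * m) /\
  INR (y i) <= snd p <= INR (y i) + 1.

Definition connector (m i : nat) (p : R * R) : Prop :=
  INR (i * m) - 1 <= fst p <= INR (i * m) /\
  INR (y i) + 1 <= snd p <= INR (y (S i)) + 1.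

Definition D (n m : nat) (p : R * R) : Prop :=
  (exists i, (1 <= i <= 2 ^ n)%nat /\ bar m i p) \/
  (exists i, (1 <= i <= 2 ^ n - 1)%nat /\ connector m i p).

Definition translate (S : R * R -> Prop) (v : R * R) (p : R * R) : Prop :=
  S (fst p - fst v, snd p - snd v).

Definition interior2 (S : R * R -> Prop) (p : R * R) : Prop :=
  exists eps, 0 < eps /\
    forall q : R * R,
      (fst q - fst p) ^ 2 + (snd q - snd p) ^ 2 < eps ^ 2 -> S q.

(* With nu2_sum N = nu_2(1) + ... + nu_2(N) = nu_2(N!), one has
   y (N + 1) = N + nu2_sum N, and nu2_sum is superadditive because
   nu2_sum N = N/2 + nu2_sum (N/2); hence y j + y k <= y i whenever
   j + k <= i + 1.  A point of bar or connector i of D lies in the quadrant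
   X <= i m, Y >= y i, and also in X >= (i-1) m, Y <= y i + 1 (bar) or in
   X >= i m - 1, Y <= y (i+1) + 1 (connector).  For a point of both A and A',
   the first quadrant for A and the second for A', together with
   superadditivity and xs, ys >= 1, force X = i m or Y = y i in the
   coordinates of A.  So A and A' meet only on grid lines, which contain no
   open disc. *)
From Stdlib Require Import Reals Lra Lia Arith List Classical.

Local Open Scope nat_scope.

Lemma nu2_aux_fuel f1 f2 i : i <= f1 -> i <= f2 -> nu2_aux f1 i = nu2_aux f2 i.
Proof.
  revert f2 i; induction f1 as [|f1 IH]; intros f2 i H1 H2.
  { replace i with 0 by lia; destruct f2; reflexivity. }
  destruct f2 as [|f2]; [replace i with 0 by lia; reflexivity|].
  cbn [nu2_aux]; destruct (Nat.eqb_spec i 0); [reflexivity|].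
  destruct (Nat.even i); [|reflexivity].
  f_equal; apply IH; pose proof (Nat.div_lt i 2); lia.
Qed.

Lemma nu2_double k : 1 <= k -> nu2 (2 * k) = S (nu2 k).
Proof.
  intros Hk; unfold nu2.
  replace (nu2_aux (2 * k) (2 * k)) with (nu2_aux (S (2 * k - 1)) (2 * k)) by (f_equal; lia).
  cbn [nu2_aux]; rewrite Nat.even_even.
  destruct (Nat.eqb_spec (2 * k) 0); [lia|].
  rewrite Nat.mul_comm, Nat.div_mul by lia.
  f_equal; apply nu2_aux_fuel; lia.
Qed.

Lemma nu2_odd k : nu2 (2 * k + 1) = 0.
Proof.
  unfold nu2; replace (2 * k + 1) with (S (2 * k)) by lia; cbn [nu2_aux].
  rewrite Nat.even_succ, Nat.odd_even; reflexivity.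
Qed.

Fixpoint nu2_sum (N : nat) : nat :=
  match N with
  | 0 => 0
  | S N' => nu2_sum N' + nu2 N
  end.

Lemma nu2_sum_double N : nu2_sum (2 * N) = N + nu2_sum N /\ nu2_sum (2 * N + 1) = N + nu2_sum N.
Proof.
  induction N as [|N [IHeven IHodd]]; [split; reflexivity|].
  assert (Heven : nu2_sum (2 * S N) = S N + nu2_sum (S N)).
  { replace (2 * S N) with (S (2 * N + 1)) by lia; cbn [nu2_sum].
    replace (S (2 * N + 1)) with (2 * S N) by lia.
    rewrite nu2_double, IHodd by lia; lia. }
  split; [exact Heven|].
  replace (2 * S N + 1) with (S (2 * S N)) by lia.
  change (nu2_sum (2 * S N) + nu2 (S (2 * S N)) = S N + nu2_sum (S N)).
  rewrite Heven; replace (S (2 * S N)) with (2 * S N + 1) by lia.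
  rewrite nu2_odd; lia.
Qed.

Lemma nu2_sum_half N : nu2_sum N = N / 2 + nu2_sum (N / 2).
Proof.
  destruct (Nat.Even_or_Odd N) as [[k ->] | [k ->]].
  - rewrite Nat.mul_comm, Nat.div_mul, Nat.mul_comm by lia; apply nu2_sum_double.
  - replace ((2 * k + 1) / 2) with k by (apply Nat.div_unique with 1; lia).
    apply nu2_sum_double.
Qed.

Lemma nu2_sum_mono a b : a <= b -> nu2_sum a <= nu2_sum b.
Proof. induction 1; cbn [nu2_sum]; lia. Qed.

Lemma div2_add_le a b : a / 2 + b / 2 <= (a + b) / 2.
Proof.
  pose proof (Nat.div_mod_eq a 2); pose proof (Nat.mod_upper_bound a 2);
  pose proof (Nat.div_mod_eq b 2); pose proof (Nat.mod_upper_bound b 2);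
  pose proof (Nat.div_mod_eq (a + b) 2); pose proof (Nat.mod_upper_bound (a + b) 2).
  lia.
Qed.

Lemma nu2_sum_superadditive a b : nu2_sum a + nu2_sum b <= nu2_sum (a + b).
Proof.
  revert b; induction a as [a IH] using (well_founded_induction lt_wf); intros b.
  destruct (Nat.eq_dec a 0) as [-> | Ha]; [reflexivity|].
  rewrite (nu2_sum_half a), (nu2_sum_half b), (nu2_sum_half (a + b)).
  pose proof (div2_add_le a b) as Hdiv.
  pose proof (IH (a / 2) ltac:(apply Nat.div_lt; lia) (b / 2)).
  pose proof (nu2_sum_mono _ _ Hdiv).
  lia.
Qed.

Lemma y_succ N : y (S N) = N + nu2_sum N.
Proof.
  induction N as [|N IH]; [reflexivity|].
  unfold y in *; cbn [Nat.sub] in *; rewrite Nat.sub_0_r in IH.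
  change (list_sum (map s (seq 1 (S N))) = S N + nu2_sum (S N)).
  change (list_sum (map s (seq 1 N)) = N + nu2_sum N) in IH.
  rewrite seq_S, map_app, list_sum_app, IH; cbn [nu2_sum list_sum fold_right map].
  unfold s; change (1 + N) with (S N); lia.
Qed.

Lemma y_add_le j k i : 1 <= j -> 1 <= k -> j + k <= S i -> y j + y k <= y i.
Proof.
  intros Hj Hk Hi.
  destruct j as [|j], k as [|k], i as [|i]; try lia.
  rewrite !y_succ.
  pose proof (nu2_sum_superadditive j k).
  pose proof (nu2_sum_mono (j + k) i ltac:(lia)).
  lia.
Qed.

Local Open Scope R_scope.

Definition is_nat (x : R) : Prop := exists k : nat, x = INR k.

Lemma is_nat_add_frac x d : 0 < d < 1 -> is_nat x -> ~ is_nat (x + d).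
Proof.
  intros Hd [k Hk] [l Hl].
  destruct (le_lt_dec l k) as [Hlk | Hkl].
  - apply le_INR in Hlk; lra.
  - apply le_INR in Hkl; rewrite S_INR in Hkl; lra.
Qed.

Lemma exists_shift_not_nat x d : 0 < d < 1 -> exists e, (e = 0 \/ e = d) /\ ~ is_nat (x + e).
Proof.
  intros Hd; destruct (classic (is_nat x)) as [Hx | Hx].
  - exists d; split; [right; reflexivity | exact (is_nat_add_frac x d Hd Hx)].
  - exists 0; split; [left; reflexivity | now rewrite Rplus_0_r].
Qed.

Lemma interior2_and (S T : R * R -> Prop) p :
  interior2 S p -> interior2 T p -> interior2 (fun q => S q /\ T q) p.
Proof.
  intros [e1 [He1 H1]] [e2 [He2 H2]].
  exists (Rmin e1 e2); split; [now apply Rmin_glb_lt|].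
  intros q Hq; pose proof (Rmin_l e1 e2); pose proof (Rmin_r e1 e2).
  pose proof (Rmin_glb_lt e1 e2 0 He1 He2).
  split; [apply H1 | apply H2]; nra.
Qed.

Lemma interior2_off_grid (S : R * R -> Prop) p c1 c2 :
  interior2 S p -> exists q, S q /\ ~ is_nat (fst q - c1) /\ ~ is_nat (snd q - c2).
Proof.
  intros [eps [Heps H]].
  set (d := Rmin (eps / 2) (1 / 2)).
  assert (Hd : 0 < d < 1 /\ d <= eps / 2).
  { pose proof (Rmin_glb_lt (eps / 2) (1 / 2) 0 ltac:(lra) ltac:(lra)).
    pose proof (Rmin_l (eps / 2) (1 / 2)); pose proof (Rmin_r (eps / 2) (1 / 2)).
    unfold d; lra. }
  destruct (exists_shift_not_nat (fst p - c1) d ltac:(lra)) as [e1 [He1 N1]].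
  destruct (exists_shift_not_nat (snd p - c2) d ltac:(lra)) as [e2 [He2 N2]].
  exists (fst p + e1, snd p + e2); cbn [fst snd]; repeat split.
  - apply H; cbn [fst snd].
    assert (e1 ^ 2 <= d ^ 2) by (destruct He1 as [-> | ->]; nra).
    assert (e2 ^ 2 <= d ^ 2) by (destruct He2 as [-> | ->]; nra).
    replace (fst p + e1 - fst p) with e1 by ring.
    replace (snd p + e2 - snd p) with e2 by ring.
    nra.
  - now replace (fst p + e1 - c1) with (fst p - c1 + e1) by ring.
  - now replace (snd p + e2 - c2) with (snd p - c2 + e2) by ring.
Qed.

Lemma translate_compose (S : R * R -> Prop) u v p :
  translate (translate S u) v p <-> translate S (fst u + fst v, snd u + snd v) p.
Proof.
  unfold translate; cbn [fst snd].
  replace (fst p - fst v - fst u) with (fst p - (fst u + fst v)) by ring.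
  replace (snd p - snd v - snd u) with (snd p - (snd u + snd v)) by ring.
  reflexivity.
Qed.

Lemma bar_translate_lower_left m i u p :
  translate (bar m i) u p -> fst u + INR ((i - 1) * m) <= fst p /\ snd u + INR (y i) <= snd p.
Proof. unfold translate, bar; cbn [fst snd]; lra. Qed.

Lemma bar_translate_corner m i u :
  translate (bar m i) u (fst u + INR ((i - 1) * m), snd u + INR (y i)).
Proof.
  assert (INR ((i - 1) * m) <= INR (i * m)) by (apply le_INR, Nat.mul_le_mono_r; lia).
  unfold translate, bar; cbn [fst snd]; lra.
Qed.

Lemma bar_translate_inj m i j u v :
  (forall p, translate (bar m i) u p <-> translate (bar m j) v p) ->
  fst u + INR ((i - 1) * m) = fst v + INR ((j - 1) * m) /\ snd u + INR (y i) = snd v + INR (y j).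
Proof.
  intros H.
  pose proof (bar_translate_lower_left m j v _ (proj1 (H _) (bar_translate_corner m i u))).
  pose proof (bar_translate_lower_left m i u _ (proj2 (H _) (bar_translate_corner m j v))).
  cbn [fst snd] in *; lra.
Qed.

Lemma D_lower_corner n m X Y :
  D n m (X, Y) -> exists i, (1 <= i)%nat /\ X <= INR (i * m) /\ INR (y i) <= Y.
Proof.
  intros [[i [Hi [[_ HX] [HY _]]]] | [i [Hi [[_ HX] [HY _]]]]];
    exists i; cbn [fst snd] in *; repeat split; lia || lra.
Qed.

Lemma D_upper_corner n m X Y :
  D n m (X, Y) -> exists j, (1 <= j)%nat /\
    ((INR ((j - 1) * m) <= X /\ Y <= INR (y j) + 1) \/
     (INR (j * m) - 1 <= X /\ Y <= INR (y (S j)) + 1)).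
Proof.
  intros [[j [Hj [[HX _] [_ HY]]]] | [j [Hj [[HX _] [_ HY]]]]];
    exists j; cbn [fst snd] in *; split; try lia; [left | right]; lra.
Qed.

Lemma add_lt_of_INR_mul_lt a b i m : INR (a * m) + INR (b * m) < INR (i * m) -> (a + b < i)%nat.
Proof.
  rewrite <- plus_INR, <- Nat.mul_add_distr_r; intros H; apply INR_lt in H.
  destruct (Nat.lt_ge_cases (a + b) i) as [Hlt | Hge]; [exact Hlt|].
  pose proof (Nat.mul_le_mono_r _ _ m Hge); lia.
Qed.

Lemma INR_y_add_le j k i :
  (1 <= j)%nat -> (1 <= k)%nat -> (j + k <= S i)%nat -> INR (y j) + INR (y k) <= INR (y i).
Proof. intros Hj Hk Hi; rewrite <- plus_INR; apply le_INR, y_add_le; assumption. Qed.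

Lemma D_overlap_on_grid n m r xs ys X Y :
  (1 <= r)%nat -> 1 <= xs -> 1 <= ys ->
  D n m (X, Y) -> D n m (X - INR ((r - 1) * m) - xs, Y - INR (y r) + ys) ->
  is_nat X \/ is_nat Y.
Proof.
  intros Hr Hxs Hys HA HA'.
  destruct (D_lower_corner n m X Y HA) as [i [Hi [HXi HYi]]].
  destruct (D_upper_corner n m _ _ HA') as [j [Hj [[HX HY] | [HX HY]]]].
  - pose proof (add_lt_of_INR_mul_lt (j - 1) (r - 1) i m ltac:(lra)).
    pose proof (INR_y_add_le j r i Hj Hr ltac:(lia)).
    right; exists (y i); lra.
  - destruct (Rle_lt_or_eq_dec _ _ HXi) as [HXlt | HXeq]; [| left; now exists (i * m)%nat].
    pose proof (add_lt_of_INR_mul_lt j (r - 1) i m ltac:(lra)).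
    pose proof (INR_y_add_le (S j) r i ltac:(lia) Hr ltac:(lia)).
    right; exists (y i); lra.
Qed.

Theorem lemma2 (m n : nat) (hm : (2 <= m)%nat) (hn : (2 <= n)%nat)
  (a b : R * R) (r : nat) (hr : (1 <= r <= 2 ^ n)%nat)
  (xs ys : R) (hx : 1 <= xs <= INR m - 1) (hy : 1 <= ys)
  (hB : forall p : R * R,
      translate (bar m 1) b p <->
      translate (translate (bar m r) a) (xs, - ys) p) :
  forall p : R * R,
    ~ (interior2 (translate (D n m) a) p /\ interior2 (translate (D n m) b) p).
Proof.
  intros p [HA HB].
  destruct (bar_translate_inj m 1 r b (fst a + xs, snd a + - ys))
    as [Hb1 Hb2]; [intros q; rewrite hB; apply translate_compose|].
  cbn [fst snd] in Hb1, Hb2.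
  change (INR ((1 - 1) * m)) with 0 in Hb1; change (INR (y 1)) with 0 in Hb2.
  destruct (interior2_off_grid _ p (fst a) (snd a) (interior2_and _ _ p HA HB))
    as [q [[Qa Qb] [Nx Ny]]].
  unfold translate in Qa, Qb.
  replace (fst q - fst b, snd q - snd b)
    with (fst q - fst a - INR ((r - 1) * m) - xs, snd q - snd a - INR (y r) + ys) in Qb
    by (f_equal; lra).
  destruct (D_overlap_on_grid n m r xs ys _ _ ltac:(lia) ltac:(lra) hy Qa Qb) as [HX | HY].
  - exact (Nx HX).
  - exact (Ny HY).
Qed.
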